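(* Let $G$ be a graph of order $n$ with no isolated vertices such that $\gamma_{\rm gr}^t(G)=n$, and let $S=(v_1,\ldots,v_n)$ be a total dominating sequence of $G$ of length $n$. If $x$ and $y$ are vertices of $G$ such that $x$ footprints $y$ with respect to $S$, then $y$ also footprints $x$ with respect to $S$.
   Context: All graphs are finite, simple, without isolated vertices. $N(v)$ denotes the open neighborhood of $v$. A sequence $S=(v_1,\ldots,v_k)$ of distinct vertices of $G$ is a legal (open neighborhood) sequence if $N(v_i)\setminus \bigcup_{j=1}^{i-1} N(v_j)\neq\emptyset$ for every $i\in\{2,\ldots,k\}$; it is a total dominating sequence if moreover $\{v_1,\ldots,v_k\}$ is a total dominating set of $G$ (every vertex has a neighbor in it). For a legal sequence $S$, the vertex $v_i$ footprints every vertex $u \in N(v_i)\setminus \bigcup_{j=1}^{i-1} N(v_j)$. The Grundy total domination number $\gamma_{\rm gr}^t(G)$ is the maximum length of a total dominating sequence of $G$. *)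

From mathcomp Require Import all_boot.
Set Implicit Arguments. Unset Strict Implicit. Unset Printing Implicit Defensive.

Definition simple_graph (T : finType) (e : rel T) : Prop :=
  symmetric e /\ irreflexive e.

Definition no_isolated (T : finType) (e : rel T) : Prop :=
  forall v : T, exists u : T, e v u.

Definition N (T : finType) (e : rel T) (v : T) : {set T} := [set u | e v u].

Definition Nunion (T : finType) (e : rel T) (p : seq T) : {set T} :=
  \bigcup_(w <- p) N e w.

Definition legal_seq (T : finType) (e : rel T) (s : seq T) : Prop :=
  uniq s /\
  forall (p q : seq T) (v : T), s = p ++ v :: q -> p <> [::] ->
    exists u, u \in N e v :\: Nunion e p.

Definition total_dominating (T : finType) (e : rel T) (s : seq T) : Prop :=
  forall x : T, exists2 w, w \in s & e x w.

Definition total_dominating_seq (T : finType) (e : rel T) (s : seq T) : Prop :=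
  legal_seq e s /\ total_dominating e s.

Definition grundy_total_eq (T : finType) (e : rel T) (k : nat) : Prop :=
  (exists s, total_dominating_seq e s /\ size s = k) /\
  (forall s, total_dominating_seq e s -> size s <= k).

Definition footprints (T : finType) (e : rel T) (s : seq T) (x y : T) : Prop :=
  exists (p q : seq T), s = p ++ x :: q /\ y \in N e x :\: Nunion e p.

(* Let [nbr z] be the first vertex of [S] adjacent to [z]; then [x]
   footprints [y] exactly when [nbr y = x].  Legality says that every vertex
   of [S] footprints something, so when [S] contains all [n] vertices [nbr]
   is onto, hence a permutation.  As [z] is a neighbour of [nbr z], the vertex
   [nbr (nbr z)] occurs in [S] no later than [z]; a permutation that never
   moves a vertex later in [S] is the identity, so [nbr] is an involution, and
   [nbr y = x] gives [nbr x = y]. *)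

From mathcomp Require Import all_boot.

Set Implicit Arguments.
Unset Strict Implicit.
Unset Printing Implicit Defensive.

Lemma surj_injective (T : finType) (f : T -> T) :
  (forall w, exists z, f z = w) -> injective f.
Proof.
move=> f_onto a b; apply: (@image_injP _ _ f T) => //.
rewrite eqn_leq max_card; apply/subset_leq_card/subsetP=> w _.
by have [z <-] := f_onto w; exact: image_f.
Qed.

(* Summing [r] over [T] in two orders forces [r (g z) = r z] termwise. *)
Lemma rank_nonincreasing_perm_id (T : finType) (g : T -> T) (r : T -> nat) :
  injective g -> injective r -> (forall z, r (g z) <= r z) -> g =1 id.
Proof.
move=> g_inj r_inj g_dec z; apply: r_inj; apply/eqP.
have sum_eq : \sum_i r (g i) = \sum_i r i by rewrite [RHS](reindex_inj g_inj).
have [_] := @leqif_sum T predT (fun z => r (g z) == r z) (r \o g) r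
  (fun i _ => leqif_eq (g_dec i)).
by rewrite sum_eq eqxx => /esym/forall_inP; apply.
Qed.

Lemma uniq_size_card_mem (T : finType) (s : seq T) :
  uniq s -> size s = #|T| -> forall z, z \in s.
Proof.
move=> s_uniq s_size z; have /subset_cardP : #|s| = #|T|.
  by rewrite (card_uniqP s_uniq).
by move=> /(_ (subset_predT _)) ->.
Qed.

Lemma mem_Nunion (T : finType) (e : rel T) (p : seq T) (u : T) :
  (u \in Nunion e p) = has (e^~ u) p.
Proof.
rewrite /Nunion bigcup_seq; apply/bigcupP/hasP=> [[w wp]|[w wp ewu]].
  by rewrite inE; exists w.
by exists w; rewrite ?inE.
Qed.

Lemma legal_seq_footprints (T : finType) (e : rel T) (s : seq T) (w : T) :
  legal_seq e s -> total_dominating e s -> w \in s ->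
  exists u, footprints e s w u.
Proof.
move=> [_ s_legal] s_tdom ws.
have [p [q s_pwq]] : exists p q, s = p ++ w :: q.
  by case/splitPr: ws => p q; exists p, q.
case: p s_pwq => [|v p] s_pwq.
  have [u _ wu] := s_tdom w.
  by exists u, [::], q; rewrite /Nunion big_nil setD0 inE.
have [|u u_new] := s_legal _ _ _ s_pwq; first by [].
by exists u, (v :: p), q.
Qed.

Section FirstNeighbour.

Variables (T : finType) (e : rel T) (s : seq T).
Hypotheses (e_sym : symmetric e) (s_uniq : uniq s)
  (s_tdom : total_dominating e s).

Definition first_nbr (z : T) : T := nth z s (find (e z) s).

Lemma has_nbr (z : T) : has (e z) s.
Proof. by have [w ws ezw] := s_tdom z; apply/hasP; exists w. Qed.

Lemma adj_first_nbr (z : T) : e z (first_nbr z).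
Proof. exact/nth_find/has_nbr. Qed.

Lemma index_first_nbr (z : T) : index (first_nbr z) s = find (e z) s.
Proof. by rewrite index_uniq // -has_find has_nbr. Qed.

Lemma find_nbr_le_index (w z : T) : z \in s -> e w z -> find (e w) s <= index z s.
Proof.
move=> zs ewz; rewrite leqNgt; apply/negP=> /(before_find z).
by rewrite nth_index // ewz.
Qed.

Lemma footprints_first_nbr (x y : T) : footprints e s x y <-> first_nbr y = x.
Proof.
have Nunion_nbr p : (y \in Nunion e p) = has (e y) p.
  by rewrite mem_Nunion (eq_has (e_sym y)).
split=> [[p [q [s_pxq]]] | <-].
  rewrite in_setD inE Nunion_nbr e_sym => /andP [/negbTE p_y eyx].
  have find_y : find (e y) s = size p by rewrite s_pxq find_cat p_y /= eyx addn0.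
  by rewrite /first_nbr find_y s_pxq nth_cat ltnn subnn.
have find_lt : find (e y) s < size s by rewrite -has_find has_nbr.
exists (take (find (e y) s) s), (drop (find (e y) s).+1 s); split.
  by rewrite -drop_nth ?cat_take_drop.
by rewrite in_setD inE Nunion_nbr has_take ?has_nbr // ltnn e_sym adj_first_nbr.
Qed.

Lemma first_nbr_involutive :
  injective first_nbr -> (forall z, z \in s) -> involutive first_nbr.
Proof.
move=> nbr_inj s_full z.
apply: (@rank_nonincreasing_perm_id _ (first_nbr \o first_nbr) (index^~ s)).
- exact: inj_comp.
- by move=> a b; apply: index_inj.
move=> w /=; rewrite index_first_nbr.
by apply: find_nbr_le_index; rewrite // e_sym adj_first_nbr.
Qed.

End FirstNeighbour.

Theorem mainTheorem4 (T : finType) (e : rel T) (s : seq T) (x y : T) :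
  simple_graph e -> no_isolated e ->
  grundy_total_eq e #|T| ->
  total_dominating_seq e s -> size s = #|T| ->
  footprints e s x y -> footprints e s y x.
Proof.
move=> [e_sym _] _ _ [s_legal s_tdom] s_size.
have s_uniq : uniq s by case: s_legal.
have s_full := uniq_size_card_mem s_uniq s_size.
have footprintsE := footprints_first_nbr e_sym s_tdom.
have nbr_onto w : exists u, first_nbr e s u = w.
  have [u /footprintsE] := legal_seq_footprints s_legal s_tdom (s_full w).
  by exists u.
have nbr_invol := first_nbr_involutive e_sym s_uniq s_tdom
  (surj_injective nbr_onto) s_full.
by move=> /footprintsE <-; apply/footprintsE/nbr_invol.
Qed.
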